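(* Let $K$ be an algebraically closed field and $m>1$. If $a,b$ are endomorphisms of $K^m$ whose commutator $c=ab-ba$ has rank at most one, then $a$ and $b$ have a common invariant subspace $U$ with $0\ne U\ne K^m$. *)

From HB Require Import structures.
From mathcomp Require Import all_boot all_order all_algebra.
Set Implicit Arguments. Unset Strict Implicit. Unset Printing Implicit Defensive.

(* Pick an eigenvalue x of a and put f := a - x.  Both ker f and im f are
   a-invariant, and they are proper unless a is scalar (then any proper
   b-invariant subspace works).  The commutator c of f and b is that of a and b.
   If ker f is not b-invariant, some v in ker f has v b outside ker f, so
   v c = - v b f is a nonzero vector of im f; as c has rank at most one, all of
   im c lies in im f, and f b = b f + c shows that im f is b-invariant. *)
From HB Require Import structures.
From mathcomp Require Import all_boot all_order all_algebra.
From mathcomp Require Import zify.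
Import GRing.Theory.
Local Open Scope ring_scope.

Lemma rank_le1_submx {F : fieldType} {p q n : nat}
    {A : 'M[F]_(p, n)} {B : 'M[F]_(q, n)} :
  (\rank A <= 1)%N -> (B <= A)%MS -> B != 0 -> (A <= B)%MS.
Proof.
move=> rankA sBA B_neq0; rewrite -(mxrank_leqif_sup sBA).2 eqn_leq mxrankS //.
by apply: leq_trans rankA _; rewrite lt0n mxrank_eq0.
Qed.

Lemma closed_eigenvalue {K : closedFieldType} {n : nat} (f : 'M[K]_n) :
  (0 < n)%N -> exists x, eigenvalue f x.
Proof.
move=> n_gt0; have : size (char_poly f) != 1 by rewrite size_char_poly -lt0n.
by case/closed_rootP => x; exists x; rewrite eigenvalue_root_char.
Qed.

Section ProperStableSubspaces.

Context {F : fieldType} {n : nat}.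
Implicit Types (U f g : 'M[F]_n) (x : F).

Lemma stablemx_subC U f x : stablemx U (f - x%:M) = stablemx U f.
Proof.
apply/idP/idP => Uf; last by apply: stablemxD; rewrite ?stablemxN ?stablemxC.
by rewrite -(subrK x%:M f); apply: stablemxD; rewrite ?stablemxC.
Qed.

Lemma commutator_subC f g x :
  (f - x%:M) *m g - g *m (f - x%:M) = f *m g - g *m f.
Proof. by rewrite mulmxBl mulmxBr scalar_mxC opprB addrA subrK. Qed.

Lemma rank_kermx_proper f : (0 < \rank (kermx f) < n)%N = (0 < \rank f < n)%N.
Proof. by rewrite mxrank_ker; have := rank_leq_row f; lia. Qed.

Lemma rank_eigen_proper {f x} :
  eigenvalue f x -> f != x%:M -> (0 < \rank (f - x%:M)%R < n)%N.
Proof.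
rewrite /eigenvalue /eigenspace -mxrank_eq0 -lt0n mxrank_ker subn_gt0.
by move=> -> f_nscalar; rewrite lt0n mxrank_eq0 subr_eq0 f_nscalar.
Qed.

Lemma rank1_commutator_stable {f g} :
  (\rank (f *m g - g *m f)%R <= 1)%N -> stablemx (kermx f) g \/ stablemx f g.
Proof.
set c := f *m g - g *m f => rank_c.
have [|/row_subPn[i]] := boolP (stablemx (kermx f) g); first by left.
rewrite row_mul; set v := row i (kermx f) => vg_notin_ker; right.
have vf0 : v *m f = 0 by apply/sub_kermxP; rewrite row_sub.
have vc : v *m c = - (v *m g *m f) by rewrite mulmxBr !mulmxA vf0 mul0mx sub0r.
have vc_neq0 : v *m c != 0.
  by rewrite vc oppr_eq0; apply: contra vg_notin_ker => /eqP/sub_kermxP.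
have c_sub_f : (c <= f)%MS.
  apply: submx_trans (rank_le1_submx rank_c (submxMl v c) vc_neq0) _.
  by rewrite vc eqmx_opp submxMl.
have -> : f *m g = g *m f + c by rewrite addrC subrK.
by rewrite addmx_sub ?submxMl.
Qed.

End ProperStableSubspaces.

Lemma exists_proper_stablemx {K : closedFieldType} {n : nat} (f : 'M[K]_n) :
  (1 < n)%N -> exists U : 'M[K]_n, stablemx U f /\ (0 < \rank U < n)%N.
Proof.
move=> n_gt1; have [x eig_x] := closed_eigenvalue f (ltnW n_gt1).
have [-> | f_nscalar] := eqVneq f x%:M.
  by exists (pid_mx 1); rewrite stablemxC rank_pid_mx // ltnW.
exists (eigenspace f x); split; first exact: comm_mx_stable_eigenspace.
by rewrite rank_kermx_proper rank_eigen_proper.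
Qed.

Theorem lemma2p1 (K : closedFieldType) (m : nat) (hm : (1 < m)%N)
  (a b : 'M[K]_m) (hc : (\rank (a *m b - b *m a)%R <= 1)%N) :
  exists U : 'M[K]_m,
    [/\ stablemx U a, stablemx U b, (0 < \rank U)%N & (\rank U < m)%N].
Proof.
have [x eig_x] := closed_eigenvalue a (ltnW hm).
have [a_scalar | a_nscalar] := eqVneq a x%:M.
  have [U [Ub /andP[U_gt0 U_ltm]]] := exists_proper_stablemx b hm.
  by exists U; rewrite a_scalar stablemxC.
have rank_f := rank_eigen_proper eig_x a_nscalar.
have rank_ker_f := rank_f; rewrite -rank_kermx_proper in rank_ker_f.
have f_stable : stablemx (a - x%:M) a by rewrite -(stablemx_subC _ _ x) submxMl.
have ker_f_stable : stablemx (kermx (a - x%:M)) a.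
  exact: comm_mx_stable_eigenspace.
rewrite -(commutator_subC _ _ x) in hc.
case: (rank1_commutator_stable hc) => [ker_f_b | f_b].
- by case/andP: rank_ker_f => ? ?; exists (kermx (a - x%:M)).
- by case/andP: rank_f => ? ?; exists (a - x%:M).
Qed.
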